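(* There exists a continuous, $2$-periodic matrix function $A:\mathbb{R}\to\mathbb{R}^{2\times 2}$ such that for every $t\in\mathbb{R}$ the off-diagonal entries of $A(t)$ are positive and the larger (principal) eigenvalue of $A(t)$ equals $-\tfrac12$, and yet the system $x'=A(t)x$ has a solution $x(t)$ with $\|x(2n)\|\to\infty$ as $n\to\infty$ ($n\in\mathbb{N}$).
   Context: A $2\times2$ real matrix with positive off-diagonal entries has two distinct real eigenvalues; the larger is called its principal eigenvalue. $\|\cdot\|$ denotes the Euclidean norm on $\mathbb{R}^2$. *)

From Stdlib Require Import Reals.
From Coquelicot Require Import Coquelicot.
From mathcomp Require Import all_boot all_algebra.
From mathcomp Require Import Rstruct.

Set Implicit Arguments.
Unset Strict Implicit.
Unset Printing Implicit Defensive.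

Definition principal_eigenvalue (M : 'M[R]_2) (l : R) : Prop :=
  eigenvalue M l /\ (forall m : R, eigenvalue M m -> Rle m l).

Definition norm2 (v : 'cV[R]_2) : R :=
  sqrt (Rplus (Rsqr (v ord0 ord0)) (Rsqr (v (@Ordinal 2 1 isT) ord0))).

Definition is_solution (A : R -> 'M[R]_2) (x : R -> 'cV[R]_2) : Prop :=
  forall (t : R) (i : 'I_2),
    is_derive (fun s => x s i ord0) t ((mulmx (A t) (x t)) i ord0).

From Stdlib Require Import Reals Lra.
From Coquelicot Require Import Coquelicot.
From mathcomp Require Import all_boot all_algebra.
From mathcomp Require Import Rstruct.

Set Implicit Arguments.
Unset Strict Implicit.
Unset Printing Implicit Defensive.

Import GRing.Theory Num.Theory.

(* A(t) = -1/2 I + u(t) w(t)^T is a rank-one update of -1/2 I, so its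
   eigenvalues are -1/2 and -1/2 + w.u; the sign pattern u = (+,-), w = (-,+)
   makes w.u < 0 and the off-diagonal entries u_i w_j positive.  The solution
   is x(t) = e^(t/2) (e^(phi1 t), e^(phi2 t)) with phi1, phi2 2-periodic and
   vanishing at even integers, so |x(2n)| = sqrt 2 e^n.  As w.x = e^(t/2)
   (1 + 8 cos(pi t)), the equation x' = A x reduces to phi1' = 8 cos(pi t) and
   phi2' = -1 - (1 - cos(pi t)/2) (1 + 8 cos(pi t)), both of zero mean over a
   period. *)

Section RankOneUpdate.

Local Open Scope ring_scope.

Definition rank_one_update (F : pzRingType) n (a : F) (u w : 'cV[F]_n) : 'M[F]_n :=
  a%:M + u *m w^T.

Lemma rank_one_updateE (F : pzRingType) n (a : F) (u w : 'cV[F]_n) i j :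
  rank_one_update a u w i j = a *+ (i == j) + u i 0 * w j 0.
Proof. by rewrite !mxE big_ord1 !mxE. Qed.

Lemma rank_one_update_mulmx (F : comPzRingType) n (a : F) (u w x : 'cV[F]_n) :
  rank_one_update a u w *m x = a *: x + (w^T *m x) 0 0 *: u.
Proof.
set c := (w^T *m x) 0 0.
rewrite /rank_one_update mulmxDl mul_scalar_mx -mulmxA [w^T *m x]mx11_scalar -/c.
by rewrite mul_mx_scalar.
Qed.

Lemma eigenvalue_rank_one_update (F : fieldType) n (a : F) (u w : 'cV[F]_n.+2) :
  eigenvalue (rank_one_update a u w) a.
Proof.
rewrite /eigenvalue /eigenspace /rank_one_update addrAC subrr add0r kermx_eq0.
apply: contraTN isT => /eqP rank_full.
have := leq_trans (mxrankM_maxl u w^T) (rank_leq_col u).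
by rewrite rank_full.
Qed.

Lemma eigenvalue_rank_one_update_le (F : numFieldType) n (a m : F) (u w : 'cV[F]_n) :
  (w^T *m u) 0 0 <= 0 -> eigenvalue (rank_one_update a u w) m -> m <= a.
Proof.
set s := (w^T *m u) 0 0 => s_le0 /eigenvalueP [v v_eigen v_neq0].
have shift : (m - a) *: v = (v *m u) *m w^T.
  by rewrite scalerBl -v_eigen mulmxDr mul_mx_scalar mulmxA addrC addKr.
have := congr1 (mulmx^~ u) shift.
rewrite /= -scalemxAl -(mulmxA (v *m u)) [w^T *m u]mx11_scalar -/s mul_mx_scalar.
have [vu_eq0 | vu_neq0] := eqVneq (v *m u) 0.
  move: shift; rewrite vu_eq0 mul0mx => /eqP.
  by rewrite scaler_eq0 (negPf v_neq0) orbF subr_eq0 => /eqP -> _.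
move/eqP; rewrite -subr_eq0 -scalerBl scaler_eq0 (negPf vu_neq0) orbF subr_eq0.
by move=> /eqP ma_eq_s; rewrite -subr_le0 ma_eq_s.
Qed.

End RankOneUpdate.

(* Otherwise the scalar would be read in [ring_scope] even where [R_scope] is open. *)
Arguments rank_one_update {F n} a u w : clear scopes.

Local Open Scope R_scope.

Definition col2 (a b : R) : 'cV[R]_2 := (\col_i (if i == ord0 then a else b))%R.

Lemma tr_col2_mulmx (a b c d : R) :
  ((col2 a b)^T *m col2 c d)%R ord0 ord0 = a * c + b * d :> R.
Proof. by rewrite !mxE big_ord_recr big_ord1 !mxE. Qed.

Lemma norm2_col2 (a b : R) : norm2 (col2 a b) = sqrt (a² + b²).
Proof. by rewrite /norm2 !mxE. Qed.

Lemma principal_eigenvalue_rank_one_update (a : R) (u w : 'cV[R]_2) :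
  (w^T *m u)%R ord0 ord0 <= 0 -> principal_eigenvalue (rank_one_update a u w) a.
Proof.
move=> /RleP wu_le0; split; first exact: eigenvalue_rank_one_update.
by move=> m /(eigenvalue_rank_one_update_le wu_le0) /RleP.
Qed.

Lemma rank_one_update_col2_offdiag_gt0 (a u0 u1 w0 w1 : R) (i j : 'I_2) :
  0 < u0 -> u1 < 0 -> w0 < 0 -> 0 < w1 -> i <> j ->
  0 < rank_one_update a (col2 u0 u1) (col2 w0 w1) i j.
Proof.
move=> u0_gt0 u1_lt0 w0_lt0 w1_gt0 /eqP i_neq_j.
rewrite rank_one_updateE (negPf i_neq_j) mulr0n add0r !mxE.
case: i j i_neq_j => [[|[|i]] Hi] // [[|[|j]] Hj] //= _.
all: by rewrite -RmultE; nra.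
Qed.

Lemma continuous_rank_one_update (a : R) (u w : R -> 'cV[R]_2) (i j : 'I_2) (t : R) :
  (forall k, continuous (fun s => u s k ord0) t) ->
  (forall k, continuous (fun s => w s k ord0) t) ->
  continuous (fun s => rank_one_update a (u s) (w s) i j) t.
Proof.
move=> u_cont w_cont.
apply: (continuous_ext (fun s => a *+ (i == j) + u s i ord0 * w s j ord0)%R).
  by move=> s; rewrite rank_one_updateE.
apply: continuous_plus; first exact: continuous_const.
exact: continuous_mult.
Qed.

Lemma is_solution_rank_one_update (a : R) (u w x : R -> 'cV[R]_2) :
  (forall t i, is_derive (fun s => x s i ord0) t
     (a * x t i ord0 + ((w t)^T *m x t)%R ord0 ord0 * u t i ord0)) ->
  is_solution (fun t => rank_one_update a (u t) (w t)) x.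
Proof.
by move=> x_deriv t i; move: (x_deriv t i); rewrite rank_one_update_mulmx !mxE.
Qed.

Lemma continuous_col2 (f g : R -> R) (t : R) :
  continuous f t -> continuous g t ->
  forall k, continuous (fun s => col2 (f s) (g s) k ord0) t.
Proof.
move=> f_cont g_cont k.
apply: (continuous_ext (fun s => if k == ord0 then f s else g s)).
  by move=> s; rewrite mxE.
by case: (k == ord0).
Qed.

Lemma is_derive_col2 (f g : R -> R) (t df dg : R) (k : 'I_2) :
  is_derive f t df -> is_derive g t dg ->
  is_derive (fun s => col2 (f s) (g s) k ord0) t (col2 df dg k ord0).
Proof.
move=> f_deriv g_deriv.
apply: (is_derive_ext (fun s => if k == ord0 then f s else g s)).
  by move=> s; rewrite mxE.
by rewrite mxE; case: (k == ord0).
Qed.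

Definition cosp (t : R) : R := cos (PI * t).
Definition sinp (t : R) : R := sin (PI * t).

Lemma cosp_periodic (t : R) : cosp (t + 2) = cosp t.
Proof. by rewrite /cosp -(cos_period (PI * t) 1) /=; congr cos; ring. Qed.

Lemma sinp_periodic (t : R) : sinp (t + 2) = sinp t.
Proof. by rewrite /sinp -(sin_period (PI * t) 1) /=; congr sin; ring. Qed.

Lemma sinp_even (n : nat) : sinp (2 * INR n) = 0.
Proof.
by rewrite /sinp -[RHS]sin_0 -(sin_period 0 n); congr sin; ring.
Qed.

Definition phi1 (t : R) : R := 8 / PI * sinp t.
Definition phi2 (t : R) : R := (2 * sinp t * cosp t - 15/2 * sinp t) / PI.

Lemma is_derive_phi1 (t : R) : is_derive phi1 t (8 * cosp t).
Proof.
rewrite /phi1 /sinp /cosp; auto_derive; first by [].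
by field; apply: PI_neq0.
Qed.

Lemma is_derive_phi2 (t : R) :
  is_derive phi2 t (-1 - (1 - cosp t / 2) * (1 + 8 * cosp t)).
Proof.
rewrite /phi2 /sinp /cosp; auto_derive; first by [].
have sin2 : sin (PI * t) ^ 2 = 1 - cos (PI * t) ^ 2.
  by rewrite -!Rsqr_pow2 sin2.
field_simplify; last exact: PI_neq0.
by rewrite sin2; field; apply: PI_neq0.
Qed.

Lemma is_derive_exp_half_exp (phi : R -> R) (t d : R) :
  is_derive phi t d ->
  is_derive (fun s => exp (s / 2) * exp (phi s)) t
    ((1/2 + d) * (exp (t / 2) * exp (phi t))).
Proof.
move=> phi_deriv.
have phi_ex : ex_derive phi t by exists d.
auto_derive; first by [].
by rewrite (is_derive_unique _ _ _ phi_deriv) /Rdiv; ring.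
Qed.

Definition uvec (t : R) : 'cV[R]_2 :=
  col2 (exp (phi1 t)) (- (exp (phi2 t) * (1 - cosp t / 2))).
Definition wvec (t : R) : 'cV[R]_2 :=
  col2 (- (8 / exp (phi1 t))) ((9 + 8 * cosp t) / exp (phi2 t)).
Definition xsol (t : R) : 'cV[R]_2 :=
  col2 (exp (t / 2) * exp (phi1 t)) (exp (t / 2) * exp (phi2 t)).
Definition Amat (t : R) : 'M[R]_2 := rank_one_update (- (1/2)) (uvec t) (wvec t).

Lemma uvec_wvec_sign_pattern (t : R) :
  [/\ 0 < exp (phi1 t), - (exp (phi2 t) * (1 - cosp t / 2)) < 0,
      - (8 / exp (phi1 t)) < 0 & 0 < (9 + 8 * cosp t) / exp (phi2 t)].
Proof.
have e1 := exp_pos (phi1 t); have e2 := exp_pos (phi2 t).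
have [c_ge c_le] := COS_bound (PI * t); rewrite -/(cosp t) in c_ge c_le.
split=> //.
- nra.
- have : 0 < 8 / exp (phi1 t) by apply: Rdiv_lt_0_compat; lra.
  lra.
- by apply: Rdiv_lt_0_compat; lra.
Qed.

Lemma Amat_continuous (i j : 'I_2) (t : R) : continuous (fun s => Amat s i j) t.
Proof.
have phi1_ex s : ex_derive phi1 s by eexists; apply: is_derive_phi1.
have phi2_ex s : ex_derive phi2 s by eexists; apply: is_derive_phi2.
apply: continuous_rank_one_update => k; apply: continuous_col2;
  apply: ex_derive_continuous; rewrite /cosp; auto_derive;
  by repeat split; auto; apply: exp_neq_0.
Qed.

Lemma Amat_periodic (t : R) : Amat (t + 2) = Amat t.
Proof.
by rewrite /Amat /uvec /wvec /phi1 /phi2 cosp_periodic sinp_periodic.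
Qed.

Lemma Amat_offdiag_gt0 (t : R) (i j : 'I_2) : i <> j -> 0 < Amat t i j.
Proof.
have [? ? ? ?] := uvec_wvec_sign_pattern t.
exact: rank_one_update_col2_offdiag_gt0.
Qed.

Lemma Amat_principal_eigenvalue (t : R) : principal_eigenvalue (Amat t) (- (1/2)).
Proof.
have [? ? ? ?] := uvec_wvec_sign_pattern t.
apply: principal_eigenvalue_rank_one_update.
rewrite tr_col2_mulmx; nra.
Qed.

Lemma wvec_mulmx_xsol (t : R) :
  ((wvec t)^T *m xsol t)%R ord0 ord0 = exp (t / 2) * (1 + 8 * cosp t) :> R.
Proof.
have e1 := exp_neq_0 (phi1 t); have e2 := exp_neq_0 (phi2 t).
by rewrite tr_col2_mulmx; field.
Qed.

Lemma xsol_is_solution : is_solution Amat xsol.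
Proof.
apply: is_solution_rank_one_update => t i.
have := is_derive_col2 i (is_derive_exp_half_exp (is_derive_phi1 t))
  (is_derive_exp_half_exp (is_derive_phi2 t)).
move=> /(@eq_ind R _ (is_derive (fun s => xsol s i ord0) t)); apply.
rewrite wvec_mulmx_xsol !mxE.
by case: (i == ord0); field.
Qed.

Lemma xsol_even (n : nat) : xsol (2 * INR n) = col2 (exp (INR n)) (exp (INR n)).
Proof.
have half_even : 2 * INR n / 2 = INR n by field.
have phi1_even : phi1 (2 * INR n) = 0 by rewrite /phi1 sinp_even; ring.
have phi2_even : phi2 (2 * INR n) = 0 by rewrite /phi2 sinp_even; field; apply: PI_neq0.
by rewrite /xsol half_even phi1_even phi2_even exp_0 Rmult_1_r.
Qed.

Lemma norm2_xsol_even_ge (n : nat) : INR n <= norm2 (xsol (2 * INR n)).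
Proof.
rewrite xsol_even norm2_col2.
apply: (Rle_trans _ (exp (INR n))); first by have := exp_ineq1_le (INR n); lra.
rewrite -[X in X <= _]sqrt_Rsqr; last exact/Rlt_le/exp_pos.
by apply: sqrt_le_1_alt; have := Rle_0_sqr (exp (INR n)); lra.
Qed.

Theorem mainTheorem2 :
  exists A : R -> 'M[R]_2,
    (forall i j : 'I_2, forall t : R, continuous (fun s => A s i j) t) /\
    (forall t : R, A (t + 2) = A t) /\
    (forall t : R, forall i j : 'I_2, i <> j -> 0 < A t i j) /\
    (forall t : R, principal_eigenvalue (A t) (- (1 / 2))) /\
    exists x : R -> 'cV[R]_2,
      is_solution A x /\
      is_lim_seq (fun n : nat => norm2 (x (2 * INR n))) p_infty.
Proof.
exists Amat; split; first exact: Amat_continuous.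
split; first exact: Amat_periodic.
split; first exact: Amat_offdiag_gt0.
split; first exact: Amat_principal_eigenvalue.
exists xsol; split; first exact: xsol_is_solution.
apply: (is_lim_seq_le_p_loc INR); last exact: is_lim_seq_INR.
by exists 0%N => n _; apply: norm2_xsol_even_ge.
Qed.
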